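(* Let $\mathcal G=\mathfrak g_1\oplus\mathfrak g_2$ and $\Theta\in C^1_{\mathsf{LTS}}(\mathcal G,\mathcal G)$, decomposed as $\Theta=\hat\phi_1+\hat\mu_1+\hat\psi+\hat\mu_2+\hat\phi_2$. Then the Maurer–Cartan equation $[\Theta,\Theta]_{\mathsf{LTS}}=0$ is equivalent to the following conditions: $[\hat\phi_1,\hat\mu_1]_{\mathsf{LTS}}=0$; $[\hat\psi,\hat\phi_1]_{\mathsf{LTS}}+\frac12[\hat\mu_1,\hat\mu_1]_{\mathsf{LTS}}=0$; $[\hat\phi_1,\hat\mu_2]_{\mathsf{LTS}}+[\hat\psi,\hat\mu_1]_{\mathsf{LTS}}=0$; $[\hat\phi_1,\hat\phi_2]_{\mathsf{LTS}}+[\hat\mu_1,\hat\mu_2]_{\mathsf{LTS}}+\frac12[\hat\psi,\hat\psi]_{\mathsf{LTS}}=0$; $[\hat\mu_1,\hat\phi_2]_{\mathsf{LTS}}+[\hat\psi,\hat\mu_2]_{\mathsf{LTS}}=0$; $[\hat\psi,\hat\phi_2]_{\mathsf{LTS}}+\frac12[\hat\mu_2,\hat\mu_2]_{\mathsf{LTS}}=0$; $[\hat\mu_2,\hat\phi_2]_{\mathsf{LTS}}=0$.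
   Context: All vector spaces are over a field of characteristic $0$. Cochains: $C^p(\mathcal G,\mathcal G)=\mathrm{Hom}(\otimes^{2p+1}\mathcal G,\mathcal G)$, arguments $(\mathfrak X_1,\dots,\mathfrak X_p,x)$, $\mathfrak X_i=x_i\otimes y_i$; for $P\in C^p,Q\in C^q$, $(P\circ Q)(\mathfrak X_1,\dots,\mathfrak X_{p+q},x)=\sum_{k=1}^p(-1)^{(k-1)q}\sum_{\sigma\in\mathbb S(k-1,q)}(-1)^\sigma P(\mathfrak X_{\sigma(1)},\dots,\mathfrak X_{\sigma(k-1)},Q(\mathfrak X_{\sigma(k)},\dots,\mathfrak X_{\sigma(k+q-1)},x_{k+q})\otimes y_{k+q},\mathfrak X_{k+q+1},\dots,x)+\sum_{k=1}^p(-1)^{(k-1)q}\sum_{\sigma\in\mathbb S(k-1,q)}(-1)^\sigma P(\mathfrak X_{\sigma(1)},\dots,\mathfrak X_{\sigma(k-1)},x_{k+q}\otimes Q(\mathfrak X_{\sigma(k)},\dots,\mathfrak X_{\sigma(k+q-1)},y_{k+q}),\mathfrak X_{k+q+1},\dots,x)+\sum_{\sigma\in\mathbb S(p,q)}(-1)^\sigma P(\mathfrak X_{\sigma(1)},\dots,\mathfrak X_{\sigma(p)},Q(\mathfrak X_{\sigma(p+1)},\dots,\mathfrak X_{\sigma(p+q)},x))$ ($\mathbb S$ = shuffles), $[P,Q]=P\circ Q-(-1)^{pq}Q\circ P$. $C^p_{\mathsf{LTS}}(\mathcal G,\mathcal G)$ is the subspace of $P$ with $P(\dots,x,x,y)=0$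 and $P(\dots,x,y,z)+P(\dots,y,z,x)+P(\dots,z,x,y)=0$; the restricted bracket is $[\cdot,\cdot]_{\mathsf{LTS}}$. Decomposition: writing $\Theta(a,b,c)=[a,b,c]$ and $[a,b,c]_i$ for its $\mathfrak g_i$-component, with $x,y,z\in\mathfrak g_1$, $u,v,w\in\mathfrak g_2$: $\hat\phi_1((x,u),(y,v),(z,w))=(0,[x,y,z]_2)$; $\hat\mu_1=([x,y,z]_1,[x,y,w]_2+[u,y,z]_2-[v,x,z]_2)$; $\hat\psi=([x,y,w]_1+[u,y,z]_1-[v,x,z]_1,[u,v,z]_2+[x,v,w]_2-[y,u,w]_2)$; $\hat\mu_2=([u,v,z]_1+[x,v,w]_1-[y,u,w]_1,[u,v,w]_2)$; $\hat\phi_2=([u,v,w]_1,0)$. These are the components of $\Theta$ of bidegrees $3|-1,2|0,1|1,0|2,-1|3$ (bidegree $l|k$ meaning: tensors with $l+1$ factors from $\mathfrak g_1$ and $k$ from $\mathfrak g_2$ go to $\mathfrak g_1$, tensors with $l$ from $\mathfrak g_1$ and $k+1$ from $\mathfrak g_2$ go to $\mathfrak g_2$, all other tensor types go to $0$). *)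

From HB Require Import structures.
From mathcomp Require Import all_boot all_order fingroup perm all_algebra.
Set Implicit Arguments.
Unset Strict Implicit.
Unset Printing Implicit Defensive.
Import GRing.Theory.
Local Open Scope ring_scope.

(* A p-cochain in C^p(G,G) = Hom(G^{(x)(2p+1)}, G) is represented by its values
   on pure tensors: P X x = P(X_1,...,X_p,x) with X_i = (X (i-1)).1 (x) (X (i-1)).2
   (0-based indexing of the X's; only X 0 .. X (p-1) are used). *)
Definition cochain (V : Type) := (nat -> V * V) -> V -> V.

Definition shuffle (n a : nat) (s : 'S_n) : bool :=
  [forall i : 'I_n, forall j : 'I_n,
     ((i < j) && ((j < a) || (a <= i)))%N ==> (s i < s j)%N].

Definition sh (n : nat) (s : 'S_n) (i : nat) : nat :=
  oapp (fun j : 'I_n => nat_of_ord (s j)) i (insub i : option 'I_n).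

Section Bracket.
Variables (K : fieldType) (V : lmodType K).

(* arguments of P in the first (resp. second) family of terms of P o Q:
   (X_{s(1)},..,X_{s(k-1)}, Q(X_{s(k)},..,X_{s(k+q-1)},x_{k+q}) (x) y_{k+q},
    X_{k+q+1}, ...), here with k0 = k-1 *)
Definition insQ1 (q : nat) (Q : cochain V) (X : nat -> V * V) (k0 : nat)
  (s : 'S_(k0 + q)) : nat -> V * V := fun j =>
  if (j < k0)%N then X (sh s j)
  else if j == k0 then (Q (fun i => X (sh s (k0 + i))) (X (k0 + q)%N).1,
                        (X (k0 + q)%N).2)
  else X (j + q)%N.

Definition insQ2 (q : nat) (Q : cochain V) (X : nat -> V * V) (k0 : nat)
  (s : 'S_(k0 + q)) : nat -> V * V := fun j =>
  if (j < k0)%N then X (sh s j)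
  else if j == k0 then ((X (k0 + q)%N).1,
                        Q (fun i => X (sh s (k0 + i))) (X (k0 + q)%N).2)
  else X (j + q)%N.

Definition circ (p q : nat) (P Q : cochain V) : cochain V := fun X x =>
  \sum_(k0 < p) (-1) ^+ (k0 * q) *:
     \sum_(s : 'S_(k0 + q) | shuffle k0 s)
        (-1) ^+ odd_perm s *: (P (insQ1 Q X s) x + P (insQ2 Q X s) x)
  + \sum_(s : 'S_(p + q) | shuffle p s)
        (-1) ^+ odd_perm s *:
          P (fun j => X (sh s j)) (Q (fun j => X (sh s (p + j)%N)) x).

Definition bracket (p q : nat) (P Q : cochain V) : cochain V := fun X x =>
  circ p q P Q X x - (-1) ^+ (p * q) *: circ q p Q P X x.

Definition coch1 (T : V -> V -> V -> V) : cochain V :=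
  fun X x => T (X 0%N).1 (X 0%N).2 x.

End Bracket.

Section Decomposition.
Variables (K : fieldType) (V1 V2 : lmodType K).
Local Notation G := (V1 * V2)%type.
Variable T : G -> G -> G -> G.

Definition in1 (x : V1) : G := (x, 0).
Definition in2 (u : V2) : G := (0, u).

(* With a = (x,u), b = (y,v), c = (z,w); [a,b,c]_i = (T a b c).i *)
Definition phi1_hat (a b c : G) : G :=
  (0, (T (in1 a.1) (in1 b.1) (in1 c.1)).2).

Definition mu1_hat (a b c : G) : G :=
  ((T (in1 a.1) (in1 b.1) (in1 c.1)).1,
   (T (in1 a.1) (in1 b.1) (in2 c.2)).2 + (T (in2 a.2) (in1 b.1) (in1 c.1)).2
     - (T (in2 b.2) (in1 a.1) (in1 c.1)).2).

Definition psi_hat (a b c : G) : G :=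
  ((T (in1 a.1) (in1 b.1) (in2 c.2)).1 + (T (in2 a.2) (in1 b.1) (in1 c.1)).1
     - (T (in2 b.2) (in1 a.1) (in1 c.1)).1,
   (T (in2 a.2) (in2 b.2) (in1 c.1)).2 + (T (in1 a.1) (in2 b.2) (in2 c.2)).2
     - (T (in1 b.1) (in2 a.2) (in2 c.2)).2).

Definition mu2_hat (a b c : G) : G :=
  ((T (in2 a.2) (in2 b.2) (in1 c.1)).1 + (T (in1 a.1) (in2 b.2) (in2 c.2)).1
     - (T (in1 b.1) (in2 a.2) (in2 c.2)).1,
   (T (in2 a.2) (in2 b.2) (in2 c.2)).2).

Definition phi2_hat (a b c : G) : G :=
  ((T (in2 a.2) (in2 b.2) (in2 c.2)).1, 0).

End Decomposition.

Definition br1 (K : fieldType) (V : lmodType K) (A B : V -> V -> V -> V) : cochain V :=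
  bracket 1 1 (coch1 A) (coch1 B).

(* Let D_t dilate the g2-summand by t. The five components theta_0..theta_4 =
   phi1, mu1, psi, mu2, phi2 of Theta are homogeneous: theta_i of bidegree
   (3-i)|(i-1) satisfies t theta_i(D_t a, D_t b, D_t c) = t^i D_t theta_i(a,b,c),
   so [theta_i, theta_j] has weight i + j. Evaluating [Theta, Theta] on dilated
   arguments therefore gives, up to the factor t^2, D_t applied to a polynomial
   in t whose coefficient of t^d is the antidiagonal sum of the [theta_i, theta_j]
   with i + j = d. As the bracket is symmetric on 1-cochains, that sum is twice
   the d-th equation of the proposition (the sums for d = 0 and d = 8 vanish
   because phi1 and phi2 square to zero), and in characteristic 0 a polynomial
   vanishing at every nonzero t has zero coefficients. Writing Theta as the sum
   of its components only needs [x,x,y] = 0. *)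

From HB Require Import structures.
From mathcomp Require Import all_boot all_order fingroup perm all_algebra.
Import GRing.Theory.
Local Open Scope ring_scope.
Set Implicit Arguments.
Unset Strict Implicit.
Unset Printing Implicit Defensive.

Lemma perm1_eq1 (s : 'S_1) : s = 1%g.
Proof. by apply/permP => i; rewrite perm1 (ord1 i) (ord1 (s ord0)). Qed.

Lemma perm2_neq1 (s : 'S_2) : (s != 1%g) = (s == tperm ord0 ord_max).
Proof.
have ord2P (i : 'I_2) : i = ord0 \/ i = ord_max.
  by case: i => [[|[|//]] ?]; [left | right]; apply: val_inj.
apply/idP/eqP => [s_neq1 | ->]; last first.
  by apply/eqP => /permP /(_ ord0); rewrite tpermL perm1.
have : s ord0 != s ord_max by rewrite (inj_eq perm_inj).
case: (ord2P (s ord0)) (ord2P (s ord_max)) => s0 [] s1; rewrite s0 s1 ?eqxx // => _.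
- by case/eqP: s_neq1; apply/permP => i; case: (ord2P i) => ->; rewrite perm1.
- by apply/permP => i; case: (ord2P i) => ->; rewrite ?tpermL ?tpermR.
Qed.

Lemma sum_perm2 (V : nmodType) (F : 'S_2 -> V) :
  \sum_(s : 'S_2) F s = F 1%g + F (tperm ord0 ord_max).
Proof.
by rewrite (bigD1 1%g) //= (big_pred1 (tperm ord0 ord_max)) // => s; exact: perm2_neq1.
Qed.

Lemma shuffle0 (s : 'S_1) : shuffle 0 s.
Proof. by apply/forallP => i; apply/forallP => j; rewrite (ord1 i) (ord1 j). Qed.

Lemma shuffle1 (s : 'S_2) : shuffle 1 s.
Proof.
apply/forallP => i; apply/forallP => j; apply/implyP => /andP[ij].
by case: i j ij => [[|[|//]] ?] [[|[|//]] ?].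
Qed.

Lemma sh1 n i : sh (1%g : 'S_n) i = i.
Proof. by rewrite /sh; case: insubP => //= j _ <-; rewrite perm1. Qed.

Lemma sh_ord n (s : 'S_n) (i : 'I_n) : sh s i = s i.
Proof. by rewrite /sh valK. Qed.

Lemma sh_tperm01 :
  sh (tperm ord0 ord_max : 'S_2) 0 = 1%N /\ sh (tperm ord0 ord_max : 'S_2) 1 = 0%N.
Proof. by rewrite (sh_ord _ ord0) (sh_ord _ ord_max) tpermL tpermR. Qed.

Section Composition.
Variables (K : fieldType) (V : lmodType K).
Implicit Types A B : V -> V -> V -> V.

Definition circ11 A B (a b c d x : V) : V :=
  A (B a b c) d x + A c (B a b d) x + A a b (B c d x) - A c d (B a b x).

Lemma circ_coch1 A B X x :
  circ 1 1 (coch1 A) (coch1 B) X x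
  = circ11 A B (X 0%N).1 (X 0%N).2 (X 1%N).1 (X 1%N).2 x.
Proof.
rewrite /circ big_ord1 (big_pred1 1%g) => [|s]; last first.
  by rewrite shuffle0 (perm1_eq1 s) /= eqxx.
rewrite (eq_bigl xpredT _ shuffle1) sum_perm2.
have [tp0 tp1] := sh_tperm01.
rewrite /coch1 /insQ1 /insQ2 /= !sh1 tp0 tp1 !odd_perm1 odd_tperm /=.
by rewrite !expr0 expr1 !scale1r scaleN1r addrA.
Qed.

Lemma br1E A B X x :
  br1 A B X x = circ11 A B (X 0%N).1 (X 0%N).2 (X 1%N).1 (X 1%N).2 x
              + circ11 B A (X 0%N).1 (X 0%N).2 (X 1%N).1 (X 1%N).2 x.
Proof. by rewrite /br1 /bracket !circ_coch1 expr1 scaleN1r opprK. Qed.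

Lemma br1C A B X x : br1 A B X x = br1 B A X x.
Proof. by rewrite !br1E addrC. Qed.

End Composition.

Section LinearFunction.
Variables (K : fieldType) (U W : lmodType K) (f : U -> W).
Hypothesis f_lin : linear f.
HB.instance Definition _ := GRing.isLinear.Build K U W *:%R f f_lin.

Lemma lin0 : f 0 = 0. Proof. exact: linear0. Qed.
Lemma linD u v : f (u + v) = f u + f v. Proof. exact: linearD. Qed.
Lemma linB u v : f (u - v) = f u - f v. Proof. exact: linearB. Qed.
Lemma linZ r u : f (r *: u) = r *: f u. Proof. exact: linearZ. Qed.
Lemma lin_sum I (r : seq I) (F : I -> U) : f (\sum_(i <- r) F i) = \sum_(i <- r) f (F i).
Proof. exact: linear_sum. Qed.
End LinearFunction.

Lemma powsum_eq0 (K : fieldType) (V : lmodType K) (n : nat) (v : nat -> V) :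
  [pchar K] =i pred0 ->
  (forall t : K, t != 0 -> \sum_(0 <= d < n) t ^+ d *: v d = 0) ->
  forall d, (d < n)%N -> v d = 0.
Proof.
move=> /pcharf0P natf0; elim: n v => [//|n IHn] v vanish.
have two_neq0 : (2 : K) != 0 by rewrite natf0.
(* Comparing the values at [t] and [2 t] eliminates the top coefficient. *)
have low d : (d < n)%N -> v d = 0.
  have scaled : forall d, (d < n)%N -> (2 ^+ n - 2 ^+ d) *: v d = 0.
    apply: IHn => t t_neq0.
    have := vanish (2 * t) (mulf_neq0 two_neq0 t_neq0).
    have := vanish t t_neq0.
    rewrite !big_nat_recr //= => vt v2t.
    transitivity (2 ^+ n *: (\sum_(0 <= i < n) t ^+ i *: v i + t ^+ n *: v n)
      - (\sum_(0 <= i < n) (2 * t) ^+ i *: v i + (2 * t) ^+ n *: v n));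
      last by rewrite vt v2t scaler0 subr0.
    rewrite scalerDr scaler_sumr opprD addrACA -sumrB exprMn scalerA subrr addr0.
    by apply: eq_bigr => i _; rewrite exprMn !scalerA -scalerBl mulrBr !(mulrC (t ^+ i)).
  move=> ltdn; have : (2 ^+ n - 2 ^+ d : K) != 0.
    rewrite -!natrX -natrB; last by rewrite leq_exp2l // ltnW.
    by rewrite natf0 subn_eq0 leq_exp2l // -ltnNge.
  by move=> neq0; apply: (scalerI neq0); rewrite scaled ?scaler0.
move=> d; rewrite ltnS leq_eqVlt => /orP[/eqP -> | /low //].
have := vanish 1 (oner_neq0 K); rewrite big_nat_recr //= big1_seq ?add0r ?expr1n ?scale1r //.
by move=> i; rewrite mem_index_iota => /andP[_ /low ->]; rewrite scaler0.
Qed.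

Section Trilinear.
Variables (K : fieldType) (V : lmodType K).
Implicit Types A B : V -> V -> V -> V.

Definition trilinear A :=
  [/\ forall b c, linear (fun a => A a b c),
      forall a c, linear (fun b => A a b c) & forall a b, linear (A a b)].

Lemma circ11_suml I (r : seq I) (F : I -> V -> V -> V -> V) B a b c d x :
  circ11 (fun a b c => \sum_(i <- r) F i a b c) B a b c d x
  = \sum_(i <- r) circ11 (F i) B a b c d x.
Proof. by rewrite /circ11 -!big_split -sumrB. Qed.

Lemma circ11_sumr I (r : seq I) (F : I -> V -> V -> V -> V) A a b c d x :
  trilinear A ->
  circ11 A (fun a b c => \sum_(i <- r) F i a b c) a b c d x
  = \sum_(i <- r) circ11 A (F i) a b c d x.
Proof.
case=> A1 A2 A3; rewrite /circ11 (lin_sum (A1 d x)) (lin_sum (A2 c x)).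
by rewrite (lin_sum (A3 a b)) (lin_sum (A3 c d)) -!big_split -sumrB.
Qed.

Lemma br1_ext A A' B B' X x :
  (forall a b c, A a b c = A' a b c) -> (forall a b c, B a b c = B' a b c) ->
  br1 A B X x = br1 A' B' X x.
Proof. by move=> eqA eqB; rewrite !br1E /circ11 !eqA !eqB. Qed.

Lemma br1_sum m n (F : nat -> V -> V -> V -> V) X x :
  (forall i, trilinear (F i)) ->
  br1 (fun a b c => \sum_(m <= i < n) F i a b c)
      (fun a b c => \sum_(m <= i < n) F i a b c) X x
  = \sum_(m <= i < n) \sum_(m <= j < n) br1 (F i) (F j) X x.
Proof.
move=> F_tri; have circ11_sum a b c d y :
    circ11 (fun a b c => \sum_(m <= i < n) F i a b c)
           (fun a b c => \sum_(m <= i < n) F i a b c) a b c d y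
    = \sum_(m <= i < n) \sum_(m <= j < n) circ11 (F i) (F j) a b c d y.
  by rewrite circ11_suml; apply: eq_bigr => i _; rewrite circ11_sumr.
under eq_bigr => i _ do under eq_bigr => j _ do rewrite br1E.
rewrite br1E !circ11_sum; under eq_bigr do rewrite big_split.
by rewrite big_split /= [X in _ = _ + X]exchange_big.
Qed.

Section Homogeneous.
Variables (S : V -> V) (t : K).
Hypothesis S_lin : linear S.

Definition homogeneous w A :=
  forall a b c, t *: A (S a) (S b) (S c) = t ^+ w *: S (A a b c).

Lemma circ11_homogeneous wA wB A B a b c d x :
  trilinear A -> homogeneous wA A -> homogeneous wB B ->
  t ^+ 2 *: circ11 A B (S a) (S b) (S c) (S d) (S x)
  = t ^+ (wA + wB) *: S (circ11 A B a b c d x).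
Proof.
case=> A1 A2 A3 homA homB.
have swap r u : t *: (r *: u) = r *: (t *: u) by rewrite !scalerA mulrC.
have pow u : t ^+ wB *: (t ^+ wA *: u) = t ^+ (wA + wB) *: u.
  by rewrite scalerA -exprD addnC.
have E1 u v w y z : t *: (t *: A (B (S u) (S v) (S w)) (S y) (S z))
                    = t ^+ (wA + wB) *: S (A (B u v w) y z).
  by rewrite -(linZ (A1 _ _)) homB (linZ (A1 _ _)) swap homA pow.
have E2 u v w y z : t *: (t *: A (S y) (B (S u) (S v) (S w)) (S z))
                    = t ^+ (wA + wB) *: S (A y (B u v w) z).
  by rewrite -(linZ (A2 _ _)) homB (linZ (A2 _ _)) swap homA pow.
have E3 u v w y z : t *: (t *: A (S y) (S z) (B (S u) (S v) (S w)))
                    = t ^+ (wA + wB) *: S (A y z (B u v w)).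
  by rewrite -(linZ (A3 _ _)) homB (linZ (A3 _ _)) swap homA pow.
rewrite /circ11 expr2 -scalerA !(scalerBr, scalerDr) E1 E2 !E3.
by rewrite (linB S_lin) !(linD S_lin) !(scalerBr, scalerDr).
Qed.

Lemma br1_homogeneous wA wB A B X x :
  trilinear A -> trilinear B -> homogeneous wA A -> homogeneous wB B ->
  t ^+ 2 *: br1 A B (fun n => (S (X n).1, S (X n).2)) (S x)
  = t ^+ (wA + wB) *: S (br1 A B X x).
Proof.
move=> triA triB homA homB; rewrite !br1E; cbn [fst snd].
rewrite scalerDr (linD S_lin) [RHS]scalerDr (circ11_homogeneous _ _ _ _ _ triA homA homB).
by rewrite (circ11_homogeneous _ _ _ _ _ triB homB homA) [(wB + wA)%N]addnC.
Qed.

End Homogeneous.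
End Trilinear.

Section AntidiagonalSums.
Variables (K : fieldType) (W : lmodType K).
Implicit Type b : nat -> nat -> W.

Definition antidiagonal_sum n b d :=
  \sum_(0 <= i < n) \sum_(0 <= j < n) (if d == (i + j)%N then b i j else 0).

Lemma sum_antidiagonal_sums (t : K) n N b : (n + n <= N.+1)%N ->
  \sum_(0 <= d < N) t ^+ d *: antidiagonal_sum n b d
  = \sum_(0 <= i < n) \sum_(0 <= j < n) t ^+ (i + j) *: b i j.
Proof.
move=> le_nn_N; under eq_bigr do rewrite scaler_sumr; rewrite exchange_big.
apply: eq_big_nat => i /andP[_ lt_in]; under eq_bigr do rewrite scaler_sumr.
rewrite exchange_big; apply: eq_big_nat => j /andP[_ lt_jn].
under eq_bigr do rewrite (fun_if (GRing.scale _)) scaler0.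
have lt_ijN : (i + j < N)%N.
  by have := leq_trans (leq_add lt_in lt_jn) le_nn_N; rewrite addSn addnS ltnS.
by rewrite -big_mkcond big_nat1_eq /= lt_ijN.
Qed.

(* When [b i j] is the bracket of the components of weights [i] and [j], this is
   the equation of weight [d] in the proposition. *)
Definition mc_equation b d : W :=
  match d with
  | 1 => b 0 1
  | 2 => b 2 0 + 2^-1 *: b 1 1
  | 3 => b 0 3 + b 2 1
  | 4 => b 0 4 + b 1 3 + 2^-1 *: b 2 2
  | 5 => b 1 4 + b 2 3
  | 6 => b 2 4 + 2^-1 *: b 3 3
  | 7 => b 3 4
  | _ => 0
  end.

Lemma antidiagonal_sumE b d : (2 : K) != 0 -> (forall i j, b i j = b j i) ->
  b 0 0 = 0 -> b 4 4 = 0 -> antidiagonal_sum 5 b d = 2 *: mc_equation b d.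
Proof.
move=> two_neq0 bC b00 b44.
have twice (u : W) : 2 *: u = u + u by rewrite scaler_nat mulr2n.
have half (u v : W) : 2 *: (u + 2^-1 *: v) = u + u + v.
  by rewrite scalerDr scalerA mulfV // scale1r twice.
rewrite /antidiagonal_sum /mc_equation.
case: d => [|[|[|[|[|[|[|[|[|d]]]]]]]]];
  rewrite !big_nat_recl // !big_geq //= ?addr0 ?add0r ?scaler0 //.
- by rewrite (bC 1) twice.
- by rewrite (bC 0) half !addrA [LHS](ACl (1*3*2)).
- by rewrite (bC 1) (bC 3) twice !addrA [LHS](ACl (1*2*4*3)).
- by rewrite (bC 3 1) (bC 4) half !addrA [LHS](ACl (1*2*5*4*3)).
- by rewrite (bC 3) (bC 4) twice !addrA [LHS](ACl (1*2*4*3)).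
- by rewrite (bC 4) half !addrA [LHS](ACl (1*3*2)).
- by rewrite (bC 4) twice.
Qed.

End AntidiagonalSums.

Section Grading.
Variables (K : fieldType) (V1 V2 : lmodType K).
Local Notation G := (V1 * V2)%type.

Definition dilate (t : K) (p : G) : G := (p.1, t *: p.2).

Lemma dilate_linear t : linear (dilate t).
Proof. by move=> r [x u] [y v]; congr (_, _); rewrite /= !scalerA mulrC -scalerA scalerDr. Qed.

Lemma dilate_inj t : t != 0 -> injective (dilate t).
Proof. by move=> t_neq0 [x u] [y v] [-> /(scalerI t_neq0) ->]. Qed.

Lemma in1_linear : linear (@in1 _ V1 V2).
Proof. by move=> r x y; congr (_, _); rewrite /= scaler0 addr0. Qed.

Lemma in2_linear : linear (@in2 _ V1 V2).
Proof. by move=> r u v; congr (_, _); rewrite /= scaler0 addr0. Qed.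

Definition component (T : G -> G -> G -> G) (i : nat) :=
  match i with
  | 0 => phi1_hat T | 1 => mu1_hat T | 2 => psi_hat T | 3 => mu2_hat T
  | _ => phi2_hat T
  end.

Variable T : G -> G -> G -> G.
Hypothesis T_tri : trilinear T.

Lemma component_trilinear i : trilinear (component T i).
Proof.
case: T_tri => T1 T2 T3.
have comb3 (W : lmodType K) r (u v w u' v' w' : W) :
    (r *: u + u') + (r *: v + v') - (r *: w + w') = r *: (u + v - w) + (u' + v' - w').
  by rewrite scalerBr scalerDr opprD !addrA [LHS](ACl (1*3*5*2*4*6)).
split=> [b c r a a' | a c r b b' | a b r c c'];
  case: i => [|[|[|[|i]]]]; congr (_, _) => /=;
  by rewrite ?scaler0 ?addr0 ?in1_linear ?in2_linear ?T1 ?T2 ?T3 /= ?comb3.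
Qed.

Lemma component_homogeneous t i :
  (i < 5)%N -> homogeneous (dilate t) t i (component T i).
Proof.
case: T_tri => T1 T2 T3 lt_i5 a b c.
have in2Z := linZ in2_linear.
case: i lt_i5 => [|[|[|[|[|//]]]]] _; congr (_, _) => /=;
  rewrite ?in2Z ?(linZ (T1 _ _)) ?(linZ (T2 _ _)) ?(linZ (T3 _ _)) /=;
  by rewrite ?scaler0 ?scalerBr ?scalerDr ?scalerA ?exprS ?expr0 ?mulr1 ?mul1r ?mulrA.
Qed.

Hypothesis T_alt : forall a b, T a a b = 0.

Lemma component_sum a b c :
  T a b c = \sum_(0 <= i < 5) component T i a b c.
Proof.
case: T_tri => T1 T2 T3.
have skew u v w : T u v w = - T v u w.
  have := T_alt (u + v) w; rewrite (linD (T1 _ _)) !(linD (T2 _ _)) !T_alt add0r addr0.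
  by move/eqP; rewrite addr_eq0 => /eqP.
have split p : p = in1 V2 p.1 + in2 V1 p.2.
  by case: p => x u; congr (_, _); rewrite /= ?addr0 ?add0r.
rewrite {1}(split a) {1}(split b) {1}(split c).
rewrite !(linD (T1 _ _)) !(linD (T2 _ _)) !(linD (T3 _ _)).
rewrite (skew (in1 V2 a.1) (in2 V1 b.2)) (skew (in2 V1 a.2) (in1 V2 b.1) (in2 V1 c.2)).
rewrite !big_nat_recl // big_geq //=.
by congr (_, _) => /=; rewrite ?add0r ?addr0 !addrA [LHS](ACl (1*2*5*3*7*4*6*8)).
Qed.

Lemma br1_phi_phi X x :
  br1 (phi1_hat T) (phi1_hat T) X x = 0 /\ br1 (phi2_hat T) (phi2_hat T) X x = 0.
Proof.
case: T_tri => T1 T2 T3.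
suff circ0 A a b c d y :
    A = phi1_hat T \/ A = phi2_hat T -> circ11 A A a b c d y = 0.
  by rewrite !br1E !circ0 ?addr0 //; by [left | right].
case=> ->; apply: injective_projections => /=;
  rewrite ?(lin0 in1_linear) ?(lin0 in2_linear);
  by rewrite ?(lin0 (T1 _ _)) ?(lin0 (T2 _ _)) ?(lin0 (T3 _ _)) /= !addr0 subr0.
Qed.

Definition bracket_table X x i j := br1 (component T i) (component T j) X x.

Lemma br1_components X x :
  br1 T T X x = \sum_(0 <= i < 5) \sum_(0 <= j < 5) bracket_table X x i j.
Proof.
rewrite (br1_ext _ _ component_sum component_sum) br1_sum //.
exact: component_trilinear.
Qed.

Lemma br1_dilate t X x :
  t ^+ 2 *: br1 T T (fun n => (dilate t (X n).1, dilate t (X n).2)) (dilate t x)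
  = dilate t (\sum_(0 <= i < 5) \sum_(0 <= j < 5) t ^+ (i + j) *: bracket_table X x i j).
Proof.
rewrite br1_components scaler_sumr (lin_sum (dilate_linear t)).
apply: eq_big_nat => i /andP[_ lt_i5]; rewrite scaler_sumr (lin_sum (dilate_linear t)).
apply: eq_big_nat => j /andP[_ lt_j5]; rewrite (linZ (dilate_linear t)).
apply: br1_homogeneous;
  by [exact: dilate_linear | exact: component_trilinear | exact: component_homogeneous].
Qed.

Lemma maurer_cartan_iff : [pchar K] =i pred0 ->
  (forall X x, br1 T T X x = 0) <->
  (forall d X x, mc_equation (bracket_table X x) d = 0).
Proof.
move=> charK0; have two_neq0 : (2 : K) != 0 by move/pcharf0P: charK0 => ->.
have antidiagE X x d :
    antidiagonal_sum 5 (bracket_table X x) d = 2 *: mc_equation (bracket_table X x) d.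
  apply: antidiagonal_sumE => // [i j | |]; first exact: br1C.
    exact: (br1_phi_phi X x).1.
  exact: (br1_phi_phi X x).2.
split=> [mc d X x | eqs X x].
- have [lt_d9 | ] := ltnP d 9; last by case: d => [|[|[|[|[|[|[|[|[|d]]]]]]]]].
  apply: (scalerI two_neq0); rewrite -antidiagE scaler0.
  apply: (powsum_eq0 charK0 _ lt_d9) => t t_neq0; apply: (dilate_inj t_neq0).
  by rewrite (lin0 (dilate_linear t)) sum_antidiagonal_sums // -br1_dilate mc scaler0.
- transitivity (\sum_(0 <= d < 9) 1 ^+ d *: antidiagonal_sum 5 (bracket_table X x) d).
    rewrite br1_components sum_antidiagonal_sums //.
    by apply: eq_bigr => i _; apply: eq_bigr => j _; rewrite expr1n scale1r.
  by rewrite big1 // => d _; rewrite antidiagE eqs !scaler0.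
Qed.

End Grading.

Theorem proposition3p8 (K : fieldType) (charK0 : [pchar K] =i pred0)
  (V1 V2 : lmodType K) (T : V1 * V2 -> V1 * V2 -> V1 * V2 -> V1 * V2)
  (T_lin1 : forall (r : K) a a' b c, T (r *: a + a') b c = r *: T a b c + T a' b c)
  (T_lin2 : forall (r : K) a b b' c, T a (r *: b + b') c = r *: T a b c + T a b' c)
  (T_lin3 : forall (r : K) a b c c', T a b (r *: c + c') = r *: T a b c + T a b c')
  (T_lts1 : forall x y, T x x y = 0)
  (T_lts2 : forall x y z, T x y z + T y z x + T z x y = 0) :
  let ph1 := phi1_hat T in let m1 := mu1_hat T in let ps := psi_hat T in
  let m2 := mu2_hat T in let ph2 := phi2_hat T in
  (forall X x, br1 T T X x = 0) <->
  (forall X x, br1 ph1 m1 X x = 0) /\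
      (forall X x, br1 ps ph1 X x + 2^-1 *: br1 m1 m1 X x = 0) /\
      (forall X x, br1 ph1 m2 X x + br1 ps m1 X x = 0) /\
      (forall X x, br1 ph1 ph2 X x + br1 m1 m2 X x + 2^-1 *: br1 ps ps X x = 0) /\
      (forall X x, br1 m1 ph2 X x + br1 ps m2 X x = 0) /\
      (forall X x, br1 ps ph2 X x + 2^-1 *: br1 m2 m2 X x = 0) /\
      (forall X x, br1 m2 ph2 X x = 0).
Proof.
have T_tri : trilinear T.
  split=> [b c r a a' | a c r b b' | a b r c c'];
  [exact: T_lin1 | exact: T_lin2 | exact: T_lin3].
move=> ph1 m1 ps m2 ph2; apply: iff_trans (maurer_cartan_iff T_tri T_lts1 charK0) _.
split=> [eqs | [eq1 [eq2 [eq3 [eq4 [eq5 [eq6 eq7]]]]]] [|[|[|[|[|[|[|[|d]]]]]]]] X x //].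
- by do ![split | exact: (eqs 1%N) | exact: (eqs 2%N) | exact: (eqs 3%N) | exact: (eqs 4%N)
         | exact: (eqs 5%N) | exact: (eqs 6%N) | exact: (eqs 7%N)].
all: [> exact: eq1 | exact: eq2 | exact: eq3 | exact: eq4 | exact: eq5 | exact: eq6 | exact: eq7].
Qed.
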